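(* Let $G$ be a graph in which every edge has even multiplicity, i.e. for every pair of distinct vertices $u,v$ the number of edges joining $u$ and $v$ is even. Let $\mathcal D$ be a decomposition of $G$ into cycles, and let $C\in\mathcal D$. Then $$|\mathcal D|\le \frac{|E(G)|}{2}-|E(C)|+2.$$
   Context: Graphs may have multiple edges but no loops. For $m\ge2$, an $m$-cycle is a cycle with $m$ edges; a $2$-cycle consists of two parallel edges. A cycle decomposition of $G$ is a set of cycles in $G$ whose edge sets partition $E(G)$. *)

From mathcomp Require Import all_boot.
Set Implicit Arguments. Unset Strict Implicit. Unset Printing Implicit Defensive.

(* Parallel edges are distinct elements of E with the same endpoints. *)
Section MultiGraph.
Variables (V E : finType) (ends : E -> V * V).

Definition loopless : Prop := forall e : E, (ends e).1 != (ends e).2.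

Definition joins (e : E) (u v : V) : bool :=
  (ends e == (u, v)) || (ends e == (v, u)).

Definition mult (u v : V) : nat := #|[set e : E | joins e u v]|.

Definition even_multiplicity : Prop :=
  forall u v : V, u != v -> ~~ odd (mult u v).

Definition is_cycle (C : {set E}) : Prop :=
  exists (m : nat) (vs : 'I_m -> V) (es : 'I_m -> E),
    [/\ 1 < m, injective vs, injective es,
        C = [set es i | i in 'I_m] &
        forall i : 'I_m, joins (es i) (vs i) (vs (ordS i))].

Definition cycle_decomposition (D : {set {set E}}) : Prop :=
  (forall C, C \in D -> is_cycle C) /\ partition D [set: E].

End MultiGraph.

From mathcomp Require Import all_boot zify.
Set Implicit Arguments. Unset Strict Implicit. Unset Printing Implicit Defensive.

(* Pair every edge e with a parallel edge s e by a fixed-point-free involution,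
   which exists because all multiplicities are even.  If C has m >= 3 edges, no
   two of them are parallel, so their partners lie outside C.  Among the
   families S of cycles of D - C that contain the cycle of one such partner and
   satisfy 2|S| <= |paired S| + 2 (paired S: the edges of S whose partner is
   also in S), take a maximal one.  Maximality makes S closed: the partner of
   an edge of S lies in S or in C, since otherwise adding the cycle of that
   partner adds two paired edges.  At each vertex of C the edges of S have even
   degree and the paired ones come in parallel pairs, so the partners of two
   consecutive edges of C lie in S together; hence all m partners of C are
   unpaired edges of S.  Counting edges, |E| >= |paired S| + 2m + 2|D - S - C|,
   which gives the bound.  For m = 2 it follows from every cycle having at
   least two edges. *)

Definition partner_index (i : nat) : nat := if odd i then i.-1 else i.+1.

Lemma partner_indexK : involutive partner_index.
Proof. by move=> [|i] //; rewrite /partner_index /=; case oi: (odd i); rewrite /= ?oi. Qed.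

Lemma partner_index_neq i : partner_index i != i.
Proof. by case: i => [|i] //; rewrite /partner_index /=; case: (odd i) => /=; lia. Qed.

Lemma partner_index_lt i n : ~~ odd n -> i < n -> partner_index i < n.
Proof.
rewrite /partner_index; case: ifP => [_ _|oi en lt_in]; first by case: i => // i; lia.
rewrite ltn_neqAle lt_in andbT; apply: contraNneq en => <-.
by rewrite /= oi.
Qed.

Lemma even_fibers_pairing (T : finType) (rT : eqType) (k : T -> rT) :
  (forall x, ~~ odd #|[set y | k y == k x]|) ->
  exists s : T -> T, [/\ involutive s, forall x, s x != x & forall x, k (s x) = k x].
Proof.
move=> even_k; pose fiber x := enum [set y | k y == k x].
pose s x := nth x (fiber x) (partner_index (index x (fiber x))).
have fiber_x x : x \in fiber x by rewrite mem_enum inE.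
have index_lt x : index x (fiber x) < size (fiber x) by rewrite index_mem.
have partner_lt x : partner_index (index x (fiber x)) < size (fiber x).
  by apply: partner_index_lt; rewrite // -cardE.
have k_s x : k (s x) = k x.
  by have := mem_nth x (partner_lt x); rewrite mem_enum inE => /eqP.
have fiber_s x : fiber (s x) = fiber x by rewrite /fiber k_s.
have index_s x : index (s x) (fiber x) = partner_index (index x (fiber x)).
  by rewrite index_uniq ?enum_uniq.
have s_def y : s y = nth y (fiber y) (partner_index (index y (fiber y))) by [].
exists s; split=> // x.
  rewrite [LHS]s_def fiber_s index_s partner_indexK.
  by rewrite (set_nth_default x) ?nth_index.
apply/eqP => sx; have := partner_index_neq (index x (fiber x)).
by rewrite -index_s sx eqxx.
Qed.

Lemma involution_closed_even (T : finType) (s : T -> T) (A : {set T}) :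
  involutive s -> (forall x, s x != x) -> {in A, forall x, s x \in A} ->
  ~~ odd #|A|.
Proof.
move=> sK sF; have [n] := ubnP #|A|; elim: n A => // n IH A.
case: (set_0Vmem A) => [-> _ _|[x Ax] ltAn As]; first by rewrite cards0.
have sxA : s x \in A :\ x by rewrite !inE sF As.
have cardA : #|A| = (#|A :\ x :\ s x|).+2.
  by rewrite (cardsD1 x) Ax (cardsD1 (s x) (A :\ x)) sxA.
rewrite cardA /= negbK; apply: IH => [|y]; first by move: ltAn; rewrite cardA; lia.
rewrite !inE => /and3P[ysx yx Ay]; rewrite As // andbT.
by rewrite (inj_eq (can_inj sK)) (can2_eq sK sK) yx ysx.
Qed.

Lemma ordS_val m (i : 'I_m) : nat_of_ord (ordS i) = if i.+1 == m then 0 else i.+1.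
Proof.
have := ltn_ord i; rewrite /=; case: eqP => [-> _|Si_neq lt_im]; first exact: modnn.
by rewrite modn_small //; lia.
Qed.

Lemma ordS_neq m (i : 'I_m) : 1 < m -> ordS i != i.
Proof.
move=> m_gt1; apply/eqP => /(congr1 (@nat_of_ord _)); rewrite ordS_val.
by have := ltn_ord i; case: eqP; lia.
Qed.

Lemma ordSS_neq m (i : 'I_m) : 2 < m -> ordS (ordS i) != i.
Proof.
move=> m_gt2; apply/eqP => /(congr1 (@nat_of_ord _)); rewrite !ordS_val.
have := ltn_ord i; case: eqP => e; move: e; case: eqP; lia.
Qed.

Lemma val_iter_ordS m (i0 : 'I_m) k : val (iter k (@ordS m) i0) = (i0 + k) %% m.
Proof.
elim: k => [|k IH]; first by rewrite addn0 modn_small.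
by rewrite iterS /= IH -addn1 modnDml addn1 addnS.
Qed.

Lemma ordS_ind m (P : 'I_m -> Prop) (i0 : 'I_m) :
  P i0 -> (forall i, P i -> P (ordS i)) -> forall i, P i.
Proof.
move=> P0 PS i; have -> : i = iter (i + m - i0) (@ordS m) i0.
  apply: val_inj; rewrite val_iter_ordS subnKC ?modnDr ?modn_small //.
  by rewrite ltnW // ltn_addl.
by elim: (i + m - i0) => //= k; apply: PS.
Qed.

Section Endpoints.
Variables (V E : finType) (ends : E -> V * V).

Definition endpoints (e : E) : {set V} := [set (ends e).1; (ends e).2].
Definition edges_at (w : V) : {set E} := [set e | w \in endpoints e].

Lemma mem_edges_at w e : (e \in edges_at w) = (w \in endpoints e).
Proof. by rewrite inE. Qed.

Lemma endpoints_joins e u v : joins ends e u v -> endpoints e = [set u; v].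
Proof. by rewrite /joins /endpoints => /orP[] /eqP -> //=; rewrite setUC. Qed.

Lemma joins_endpoints e u v :
  loopless ends -> endpoints e = [set u; v] -> joins ends e u v.
Proof.
rewrite /joins /endpoints => /(_ e); case: (ends e) => a b /= ab eq_ab.
have /set2P[] : u \in [set a; b] by rewrite eq_ab set21.
  move=> ua; subst u.
  have /set2P[ba | ->] : b \in [set a; v] by rewrite -eq_ab set22.
    by rewrite ba eqxx in ab.
  by rewrite eqxx.
move=> ub; subst u.
have /set2P[ab' | ->] : a \in [set b; v] by rewrite -eq_ab set21.
  by rewrite ab' eqxx in ab.
by rewrite eqxx orbT.
Qed.

Lemma parallel_pairing : loopless ends -> even_multiplicity ends ->
  exists s : E -> E, [/\ involutive s, forall e, s e != e &
                         forall e, endpoints (s e) = endpoints e].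
Proof.
move=> no_loop even_mult; apply: even_fibers_pairing => e.
have -> : [set f | endpoints f == endpoints e] =
          [set f | joins ends f (ends e).1 (ends e).2].
  apply/setP => f; rewrite !inE; apply/eqP/idP; last exact: endpoints_joins.
  exact: joins_endpoints.
exact: even_mult (no_loop e).
Qed.

Section CycleParametrization.
Variables (m : nat) (vs : 'I_m -> V) (es : 'I_m -> E).
Hypotheses (vs_inj : injective vs)
  (es_joins : forall i, joins ends (es i) (vs i) (vs (ordS i))).

Lemma cycle_endpoints i : endpoints (es i) = [set vs i; vs (ordS i)].
Proof. exact: endpoints_joins. Qed.

Lemma cycle_vertex_endpoints j k :
  (vs k \in endpoints (es j)) = (k == j) || (k == ordS j).
Proof. by rewrite cycle_endpoints !inE !(inj_eq vs_inj). Qed.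

Lemma cycle_edges_at_even w : 1 < m -> ~~ odd #|[set j | w \in endpoints (es j)]|.
Proof.
move=> m_gt1; have [k /eqP <- | no_w] := pickP (fun k => vs k == w).
  have -> : [set j | vs k \in endpoints (es j)] = [set k; ord_pred k].
    apply/setP => j; rewrite in_set cycle_vertex_endpoints in_set2 eq_sym.
    by rewrite -(can2_eq (@ord_predK m) (@ordSK m)) [ord_pred k == j]eq_sym.
  rewrite cards2; case: eqP => // k_pred.
  by have := ordS_neq k m_gt1; rewrite {1}k_pred ord_predK eqxx.
have -> : [set j | w \in endpoints (es j)] = set0.
  apply/setP => j; rewrite in_set cycle_endpoints !inE.
  by rewrite ![w == _]eq_sym no_w no_w.
by rewrite cards0.
Qed.

Lemma cycle_endpoints_inj : 2 < m -> injective (fun i => endpoints (es i)).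
Proof.
move=> m_gt2 i j /= eq_ij.
have : vs i \in endpoints (es j) by rewrite -eq_ij cycle_endpoints set21.
rewrite cycle_vertex_endpoints => /orP[/eqP // | /eqP i_Sj].
have : vs (ordS i) \in endpoints (es j) by rewrite -eq_ij cycle_endpoints set22.
rewrite cycle_vertex_endpoints i_Sj => /orP[/eqP SSj | /eqP SSj].
  by have := ordSS_neq j m_gt2; rewrite SSj eqxx.
by have := ordS_neq (ordS j) (ltnW m_gt2); rewrite SSj eqxx.
Qed.

End CycleParametrization.

Lemma cycle_card_gt1 B : is_cycle ends B -> 1 < #|B|.
Proof. by case=> m [vs [es [m_gt1 _ es_inj -> _]]]; rewrite card_imset // card_ord. Qed.

Lemma cycle_edges_at B w : is_cycle ends B -> ~~ odd #|B :&: edges_at w|.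
Proof.
case=> m [vs [es [m_gt1 vs_inj es_inj -> es_joins]]].
have -> : es @: 'I_m :&: edges_at w = es @: [set j | w \in endpoints (es j)].
  apply/setP => e; rewrite in_setI; apply/andP/imsetP => [[/imsetP[j _ ->]]|[j]].
    by rewrite in_set => w_e; exists j; first rewrite in_set.
  by rewrite in_set => w_e ->; rewrite imset_f // in_set.
by rewrite card_imset //; apply: (cycle_edges_at_even vs_inj es_joins).
Qed.

End Endpoints.

Section CycleDecomposition.
Variables (V E : finType) (ends : E -> V * V) (D : {set {set E}}).
Implicit Types (S : {set {set E}}) (B : {set E}).
Hypotheses (D_cycles : forall B, B \in D -> is_cycle ends B)
  (D_partition : partition D [set: E]).

Lemma partition_subfamily S : S \subset D -> partition S (cover S).
Proof.
case/and3P: D_partition => _ D_triv D_nz S_D.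
apply/and3P; split => //; first exact: trivIsetS D_triv.
by apply: contra D_nz => /(subsetP S_D).
Qed.

Lemma card_cover_subfamily S : S \subset D -> #|cover S| = \sum_(B in S) #|B|.
Proof. by move/partition_subfamily/card_partition. Qed.

Lemma double_card_le_cover S : S \subset D -> 2 * #|S| <= #|cover S|.
Proof.
move=> S_D; rewrite card_cover_subfamily // -sum1_card big_distrr /=.
by apply: leq_sum => B /(subsetP S_D)/D_cycles/cycle_card_gt1; rewrite muln1.
Qed.

Lemma cover_edges_at_even S w : S \subset D -> ~~ odd #|cover S :&: edges_at ends w|.
Proof.
move=> S_D; have card_sum (A : {set E}) :
    #|A :&: edges_at ends w| = \sum_(e in A | e \in edges_at ends w) 1.
  by rewrite sum1dep_card; apply: eq_card => e; rewrite !inE.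
rewrite card_sum big_trivIset_cond; last by case/and3P: (partition_subfamily S_D).
apply: (big_ind (fun n => ~~ odd n)) => // [a b ea eb|B SB].
  by rewrite oddD (negbTE ea) (negbTE eb).
by rewrite -card_sum; apply/cycle_edges_at/D_cycles/(subsetP S_D).
Qed.

End CycleDecomposition.

Section PartnerClosure.
Variables (V E : finType) (ends : E -> V * V) (D : {set {set E}}).
Implicit Types (S : {set {set E}}) (B : {set E}).
Hypotheses (D_cycles : forall B, B \in D -> is_cycle ends B)
  (D_partition : partition D [set: E]).
Variable s : E -> E.
Hypotheses (sK : involutive s) (s_neq : forall e, s e != e)
  (s_endpoints : forall e, endpoints ends (s e) = endpoints ends e).
Variables (C : {set E}) (m : nat) (vs : 'I_m -> V) (es : 'I_m -> E).
Hypotheses (C_D : C \in D) (m_gt2 : 2 < m) (vs_inj : injective vs)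
  (es_inj : injective es) (C_def : C = [set es i | i in 'I_m])
  (es_joins : forall i, joins ends (es i) (vs i) (vs (ordS i))).

Let cover_D : cover D = [set: E] := cover_partition D_partition.

Definition paired S := [set x in cover S | s x \in cover S].

Definition partner_closed S :=
  [forall x in cover S, (s x \in C) || (s x \in cover S)].

Lemma mem_paired S x : (x \in paired S) = (x \in cover S) && (s x \in cover S).
Proof. by rewrite inE. Qed.

Lemma cover_notin_C S x : S \subset D :\ C -> x \in cover S -> x \notin C.
Proof.
move=> S_DC /bigcupP[B SB xB]; have := subsetP S_DC B SB; rewrite !inE.
case/andP=> BC BD; case/and3P: D_partition => _ /trivIsetP D_triv _.
by rewrite (disjointFr (D_triv B C BD C_D BC) xB).
Qed.

Lemma partner_notin_C i : s (es i) \notin C.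
Proof.
rewrite C_def; apply/imsetP => -[j _ sij].
have /(cycle_endpoints_inj vs_inj es_joins m_gt2) ij : 
  endpoints ends (es i) = endpoints ends (es j) by rewrite -sij s_endpoints.
by have := s_neq (es i); rewrite sij ij eqxx.
Qed.

Lemma paired_extend S x : S \subset D :\ C -> x \in cover S ->
    s x \notin C -> s x \notin cover S ->
  exists B, [/\ B \notin S, B \in D :\ C & #|paired S| + 2 <= #|paired (B |: S)|].
Proof.
move=> S_DC xS sxC sxS; have sx_D : s x \in cover D by rewrite cover_D inE.
exists (pblock D (s x)); set B := pblock D (s x).
have sxB : s x \in B by rewrite mem_pblock.
have cover_BS : cover (B |: S) = B :|: cover S.
  by rewrite /cover bigcup_setU big_set1.
split.
- by apply: contra sxS => BS; apply/bigcupP; exists B.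
- by rewrite !inE pblock_mem // andbT; apply: contraNneq sxC => <-.
have sub : x |: (s x |: paired S) \subset paired (B |: S).
  apply/subsetP => y; rewrite /paired cover_BS !inE.
  by case/or3P => [/eqP-> | /eqP-> | /andP[-> ->]]; rewrite ?sK ?xS ?sxB ?orbT.
apply: leq_trans (subset_leq_card sub); rewrite !cardsU1 !inE.
by rewrite eq_sym (negbTE (s_neq x)) (negbTE sxS) andbF addnC.
Qed.

Lemma partner_closed_family i0 : exists S,
  [/\ S \subset D :\ C, partner_closed S, s (es i0) \in cover S &
      2 * #|S| <= #|paired S| + 2].
Proof.
set B0 := pblock D (s (es i0)).
pose good S := [&& B0 \in S, S \subset D :\ C & 2 * #|S| <= #|paired S| + 2].
have good_B0 : good [set B0].
  rewrite /good set11 sub1set !inE cards1 leq_addl pblock_mem ?cover_D ?andbT //=.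
  by apply: contraNneq (partner_notin_C i0) => <-; rewrite mem_pblock cover_D.
case: (arg_maxnP (fun S : {set {set E}} => #|S|) good_B0) => S /and3P[B0S S_DC S_inv] S_max.
have s_es_S : s (es i0) \in cover S.
  by apply/bigcupP; exists B0; rewrite // mem_pblock cover_D.
exists S; split => //; apply/forall_inP => x xS; apply/negPn/negP.
rewrite negb_or => /andP[sxC sxS].
have [B [BS B_DC paired_BS]] := paired_extend S_DC xS sxC sxS.
have /S_max : good (B |: S).
  rewrite /good !inE B0S orbT subUset sub1set B_DC S_DC cardsU1 BS /=.
  rewrite mulnDr muln1 addnC; apply: leq_trans (leq_add S_inv (leqnn 2)) _.
  by rewrite leq_add2r.
by rewrite cardsU1 BS add1n /= ltnn.
Qed.

Lemma partner_closed_succ S i : S \subset D :\ C -> partner_closed S ->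
  s (es i) \in cover S -> s (es (ordS i)) \in cover S.
Proof.
move=> S_DC S_closed s_ei; apply/negPn/negP => s_eSi.
set X := cover S :&: edges_at ends (vs (ordS i)).
have X_even : ~~ odd #|X|.
  by apply: cover_edges_at_even D_cycles D_partition _ _ (subset_trans S_DC (subD1set _ _)).
have paired_even : ~~ odd #|X :&: paired S|.
  apply: involution_closed_even sK s_neq _ => x.
  rewrite !in_setI !mem_paired !mem_edges_at s_endpoints sK.
  by case/and3P=> /andP[-> ->] _ ->.
have unpaired : X :\: paired S = [set s (es i)].
  apply/setP => x; rewrite in_setD in_setI mem_paired mem_edges_at in_set1.
  apply/idP/eqP => [|->]; last first.
    rewrite sK s_ei s_endpoints (cycle_endpoints es_joins) set22 /= !andbT.
    by apply: contraL (cover_notin_C S_DC) _; rewrite C_def imset_f.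
  case/andP=> x_unpaired /andP[xS x_at]; rewrite xS /= in x_unpaired.
  have /forall_inP/(_ x xS) := S_closed; rewrite (negbTE x_unpaired) orbF.
  rewrite C_def => /imsetP[j _ sx]; rewrite -[x]sK sx.
  move: x_at; rewrite -s_endpoints sx (cycle_vertex_endpoints vs_inj es_joins).
  case/orP=> /eqP j_Si; last by rewrite (ordS_inj j_Si).
  by move: s_eSi; rewrite j_Si -sx sK xS.
have := cardsID (paired S) X; rewrite unpaired cards1 => cardX.
by move: X_even; rewrite -cardX oddD (negbTE paired_even).
Qed.

Lemma card_C : #|C| = m.
Proof. by rewrite C_def card_imset // card_ord. Qed.

Lemma partners_cover_bound S : S \subset D :\ C ->
  (forall i, s (es i) \in cover S) -> #|paired S| + m <= #|cover S|.
Proof.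
move=> S_DC partners_S.
have sC_S : s @: C \subset cover S.
  apply/subsetP => _ /imsetP[c + ->]; rewrite C_def => /imsetP[i _ ->].
  exact: partners_S.
have paired_sC : paired S \subset cover S :\: s @: C.
  apply/subsetP => x; rewrite mem_paired in_setD => /andP[xS sxS]; rewrite xS andbT.
  apply/imsetP => -[c cC xc]; move: (cover_notin_C S_DC sxS).
  by rewrite xc sK cC.
rewrite -(cardsID (s @: C) (cover S)) (setIidPr sC_S) card_imset ?card_C.
  by rewrite addnC leq_add2l subset_leq_card.
exact: can_inj sK.
Qed.

Lemma partner_closure_bound : 2 * #|D| + 2 * #|C| <= #|E| + 4.
Proof.
have m_gt0 : 0 < m by apply: ltn_trans m_gt2.
have [S [S_DC S_closed s_e0 S_inv]] := partner_closed_family (Ordinal m_gt0).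
have partners_S i : s (es i) \in cover S.
  by move: i; apply: ordS_ind s_e0 _ => j; apply: partner_closed_succ.
have S_D : S \subset D := subset_trans S_DC (subD1set D C).
have C_S : C \notin S by apply/negP => /(subsetP S_DC); rewrite !inE eqxx.
set R := D :\: S :\ C.
have R_D : R \subset D := subset_trans (subD1set _ C) (subsetDl D S).
have card_D : #|D| = #|S| + (1 + #|R|).
  by rewrite -(cardsID S D) (setIidPr S_D) (cardsD1 C (D :\: S)) !inE C_S C_D.
have card_E : #|E| = #|cover S| + (#|C| + #|cover R|).
  rewrite -cardsT -cover_D !(card_cover_subfamily D_partition) //.
  rewrite (big_setID S) (setIidPr S_D).
  have C_DS : C \in D :\: S by rewrite inE C_S C_D.
  by rewrite (big_setD1 _ C_DS).
have := double_card_le_cover D_cycles D_partition R_D.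
have := partners_cover_bound S_DC partners_S.
rewrite card_D card_E card_C; lia.
Qed.

End PartnerClosure.

Theorem mainTheorem6 (V E : finType) (ends : E -> V * V)
  (Hloop : loopless ends) (Heven : even_multiplicity ends)
  (D : {set {set E}}) (HD : cycle_decomposition ends D)
  (C : {set E}) (HC : C \in D) :
  2 * #|D| + 2 * #|C| <= #|E| + 4.
Proof.
have [s [sK s_neq s_endpoints]] := parallel_pairing Hloop Heven.
case: HD => D_cycles D_partition.
have [m [vs [es [_ vs_inj es_inj C_def es_joins]]]] := D_cycles C HC.
have [m_gt2 | m_le2] := ltnP 2 m.
  exact: (partner_closure_bound D_cycles D_partition sK s_neq s_endpoints
            HC m_gt2 vs_inj es_inj C_def es_joins).
have := double_card_le_cover D_cycles D_partition (subxx D).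
rewrite (cover_partition D_partition) cardsT C_def card_imset // card_ord.
by move: m_le2; lia.
Qed.
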